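(* Let $T_1^*\in[0,1]$ and $T_2^*=(T_1^* )^3$, and let $\tilde W^*=\{\tilde h\in\tilde W: t(K_2,\tilde h)=T_1^*,\ t(K_3,\tilde h)=T_2^*\}$. Then $$\inf_{\tilde h\in\tilde W^*}I(\tilde h)=I\big((T_2^* )^{1/3}\big)=I(T_1^* ).$$
   Context: $W$ is the set of measurable symmetric $h:[0,1]^2\to[0,1]$, $\tilde W$ its quotient under relabelling by measure-preserving bijections of $[0,1]$. $t(K_2,h)=\int h(x,y)\,dx\,dy$ and $t(K_3,h)=\int h(x_1,x_2)h(x_2,x_3)h(x_3,x_1)\,dx_1dx_2dx_3$. $I(u)=\tfrac12u\log u+\tfrac12(1-u)\log(1-u)$ with $0\log0=0$, and $I(h)=\int_{[0,1]^2}I(h(x,y))\,dx\,dy$ (well defined on $\tilde W$). *)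

From HB Require Import structures.
From mathcomp Require Import all_boot all_order all_algebra.
From mathcomp Require Import all_classical all_reals all_analysis.
Unset Printing Implicit Defensive.
Import Order.TTheory GRing.Theory Num.Theory.
Local Open Scope classical_set_scope.
Local Open Scope ring_scope.

Definition leb (R : realType) := @lebesgue_measure R.
Definition leb2 (R : realType) := (leb R \x leb R)%E.
Definition leb3 (R : realType) := (leb2 R \x leb R)%E.

Definition I01 (R : realType) : set R := `[0%R, 1%R].
Definition sq01 (R : realType) : set (R * R) := I01 R `*` I01 R.
Definition cube01 (R : realType) : set ((R * R) * R) :=
  (I01 R `*` I01 R) `*` I01 R.

(* graphons: measurable symmetric h : [0,1]^2 -> [0,1]
   (represented as functions on R*R, only values on [0,1]^2 matter) *)
Definition graphon {R : realType} (h : R * R -> R) : Prop :=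
  measurable_fun (sq01 R) h /\
  (forall x y, x \in I01 R -> y \in I01 R -> h (x, y) = h (y, x)) /\
  (forall x y, x \in I01 R -> y \in I01 R -> 0 <= h (x, y) <= 1).

Definition tK2 {R : realType} (h : R * R -> R) : R :=
  Rintegral (leb2 R) (sq01 R) h.

Definition tK3 {R : realType} (h : R * R -> R) : R :=
  Rintegral (leb3 R) (cube01 R)
    (fun z => h (z.1.1, z.1.2) * h (z.1.2, z.2) * h (z.2, z.1.1)).

Definition xlogx {R : realType} (u : R) : R := if u == 0 then 0 else u * ln u.

Definition Ient {R : realType} (u : R) : R :=
  2^-1 * xlogx u + 2^-1 * xlogx (1 - u).

Definition Igraphon {R : realType} (h : R * R -> R) : R :=
  Rintegral (leb2 R) (sq01 R) (fun z => Ient (h z)).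

From HB Require Import structures.
From mathcomp Require Import all_boot all_order all_algebra.
From mathcomp Require Import all_classical all_reals all_analysis.
From mathcomp Require Import ring lra measurable_realfun.
Import Order.TTheory GRing.Theory Num.Theory.
Local Open Scope classical_set_scope.
Local Open Scope ring_scope.

(* I is convex on [0,1], so each tangent line of I lies below it; integrating
   the tangent at T1 = t(K2,h) over [0,1]^2 gives I(h) >= I(T1) (Jensen).
   The constant graphon T1 attains this bound and has triangle density T1^3.
   At T1 = 0 or 1, where I has no finite tangent, let the tangent point tend
   to the boundary instead. *)

Section GraphonEntropy.
Variable R : realType.

Lemma measurable_I01 : measurable (I01 R).
Proof. exact: measurable_itv. Qed.

Lemma measurable_sq01 : measurable (sq01 R).
Proof. exact: measurableX measurable_I01 measurable_I01. Qed.

Lemma measurable_cube01 : measurable (cube01 R).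
Proof. exact: measurableX measurable_sq01 measurable_I01. Qed.

Lemma leb_I01 : leb R (I01 R) = 1%E.
Proof. by rewrite /leb /I01 lebesgue_measure_itv /= lte_fin ltr01 oppr0 adde0. Qed.

Lemma leb2_sq01 : leb2 R (sq01 R) = 1%E.
Proof.
rewrite /leb2 /sq01 product_measure1E; [|exact: measurable_I01..].
by change (leb R (I01 R) * leb R (I01 R) = 1)%E; rewrite leb_I01 mule1.
Qed.

Lemma leb3_cube01 : leb3 R (cube01 R) = 1%E.
Proof.
rewrite /leb3 /cube01 product_measure1E; [|exact: measurable_sq01|exact: measurable_I01].
by change (leb2 R (sq01 R) * leb R (I01 R) = 1)%E; rewrite leb_I01 leb2_sq01 mule1.
Qed.

Lemma Rintegral_sq01_cst (c : R) : Rintegral (leb2 R) (sq01 R) (fun=> c) = c.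
Proof.
rewrite Rintegral_cst; last exact: measurable_sq01.
have -> : fine (leb2 R (sq01 R)) = 1 by rewrite leb2_sq01.
by rewrite mulr1.
Qed.

Lemma bounded_in_normr_le (T : Type) (D : set T) (f : T -> R) (M : R) :
  (forall x, D x -> `|f x| <= M) -> [bounded f x | x in D].
Proof.
move=> fM; rewrite /bounded_near; near=> y => x Dx /=.
apply: le_trans (fM x Dx) _; near: y; apply: nbhs_pinfty_ge; exact: num_real.
Unshelve. all: by end_near.
Qed.

Lemma integrable_sq01 (f : R * R -> R) (M : R) : measurable_fun (sq01 R) f ->
  (forall z, sq01 R z -> `|f z| <= M) -> (leb2 R).-integrable (sq01 R) (EFin \o f).
Proof.
move=> mf fM; apply: measurable_bounded_integrable => //.
- exact: measurable_sq01.
- by rewrite -[X in (X < _)%E]/(leb2 R (sq01 R)) leb2_sq01 ltry.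
- exact: bounded_in_normr_le fM.
Qed.

Lemma xlogxE (u : R) : xlogx u = u * ln u.
Proof. by rewrite /xlogx; case: eqP => [->|]; rewrite ?mul0r. Qed.

Lemma xlogx_ge_tangent (a u : R) : 0 < a -> 0 <= u -> u * ln a + u - a <= xlogx u.
Proof.
move=> a0; rewrite le_eqVlt => /predU1P[<-|u0].
  by rewrite xlogxE !mul0r add0r sub0r oppr_le0 ltW.
have au0 : 0 < a / u by rewrite divr_gt0.
have ln_le : ln (a / u) <= a / u - 1.
  by have := @le_ln1Dx R (a / u - 1); rewrite (addrC 1) subrK; apply; lra.
rewrite ln_div ?posrE // in ln_le.
have := ler_wpM2l (ltW u0) ln_le.
rewrite !mulrBr mulrCA divff ?gt_eqF // mulr1 xlogxE; lra.
Qed.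

Lemma Ient_ge_tangent (a u : R) : 0 < a < 1 -> 0 <= u <= 1 ->
  2^-1 * (u * ln a + (1 - u) * ln (1 - a)) <= Ient u.
Proof.
move=> /andP[a0 a1] /andP[u0 u1].
have := @xlogx_ge_tangent a u a0 u0.
have := @xlogx_ge_tangent (1 - a) (1 - u) ltac:(lra) ltac:(lra).
rewrite /Ient -mulrDr; lra.
Qed.

Lemma Ient_le0 (u : R) : 0 <= u <= 1 -> Ient u <= 0.
Proof.
move=> /andP[u0 u1]; rewrite /Ient !xlogxE -mulrDr pmulr_rle0 ?invr_gt0 ?ltr0n //.
have : u * ln u <= 0 by rewrite mulr_ge0_le0 ?ln_le0.
have : (1 - u) * ln (1 - u) <= 0 by rewrite mulr_ge0_le0 ?subr_ge0 ?ln_le0 ?gerBl.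
lra.
Qed.

Lemma normr_Ient_le (u : R) : 0 <= u <= 1 -> `|Ient u| <= - (2^-1 * ln 2^-1).
Proof.
move=> u01; rewrite ler0_norm ?Ient_le0 // lerNl opprK.
have half : 1 - 2^-1 = 2^-1 :> R by field.
have := @Ient_ge_tangent 2^-1 u ltac:(lra) u01.
by rewrite half -mulrDl subrKC mul1r.
Qed.

Lemma measurable_Ient : measurable_fun setT (@Ient R).
Proof.
have -> : @Ient R = fun u => 2^-1 * (u * ln u) + 2^-1 * ((1 - u) * ln (1 - u)).
  by apply: funext => u; rewrite /Ient !xlogxE.
apply: measurable_funD; apply: measurable_funM => //.
- by apply: measurable_funM => //; exact: measurable_ln.
- apply: measurable_funM; first exact: measurable_funB.
  by apply: measurableT_comp; [exact: measurable_ln|exact: measurable_funB].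
Qed.

Lemma graphon_sq01 (h : R * R -> R) : graphon h -> forall z, sq01 R z -> 0 <= h z <= 1.
Proof. by move=> [_ [_ h01]] [x y] [/= x01 y01]; apply: h01; exact: mem_set. Qed.

Lemma Igraphon_ge_tangent (h : R * R -> R) (a : R) : graphon h -> 0 < a < 1 ->
  2^-1 * (tK2 h * ln a + (1 - tK2 h) * ln (1 - a)) <= Igraphon h.
Proof.
move=> gh a01; have h01 := @graphon_sq01 h gh.
have mh : measurable_fun (sq01 R) h by case: gh.
set c1 := 2^-1 * (ln a - ln (1 - a)); set c0 := 2^-1 * ln (1 - a).
have mc1h : measurable_fun (sq01 R) (fun z => c1 * h z).
  by apply: measurable_funM => //; exact: measurable_cst.
have c1h_le z : sq01 R z -> `|c1 * h z| <= `|c1|.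
  by move=> /h01 /andP[h0 h1]; rewrite normrM (ger0_norm h0); exact: ler_piMr.
have tangentE : Rintegral (leb2 R) (sq01 R) (fun z => c1 * h z + c0) =
    2^-1 * (tK2 h * ln a + (1 - tK2 h) * ln (1 - a)).
  rewrite RintegralD; first last.
  - by apply: (@integrable_sq01 _ `|c0|) => //; exact: measurable_cst.
  - exact: integrable_sq01 c1h_le.
  - exact: measurable_sq01.
  rewrite RintegralZl ?Rintegral_sq01_cst; first by rewrite /tK2 /c1 /c0; ring.
  - exact: measurable_sq01.
  - apply: (@integrable_sq01 _ 1) => // z /h01 /andP[h0 h1]; by rewrite ger0_norm.
rewrite -tangentE; apply: le_Rintegral.
- exact: measurable_sq01.
- apply: (@integrable_sq01 _ (`|c1| + `|c0|)) => [|z /c1h_le].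
    by apply: measurable_funD => //; exact: measurable_cst.
  by rewrite -(lerD2r `|c0|) => /(le_trans (ler_normD _ _)).
- apply: (@integrable_sq01 _ (- (2^-1 * ln 2^-1))) => [|z /h01].
    exact: measurableT_comp measurable_Ient mh.
  exact: normr_Ient_le.
- move=> z /h01 /(@Ient_ge_tangent a (h z) a01); apply: le_trans.
  by rewrite le_eqVlt; apply/predU1P; left; rewrite /c1 /c0; ring.
Qed.

(* Stands in for the missing tangent at 0 or 1, where I vanishes. *)
Lemma ge0_halfln_le (x : R) : (forall b, 0 < b < 1 -> 2^-1 * ln b <= x) -> 0 <= x.
Proof.
move=> lnb_le; rewrite leNgt; apply/negP => x0.
have := lnb_le (expR x); rewrite expRK expR_gt0 expR_lt1 x0 => /(_ isT); lra.
Qed.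

Lemma Ient_le_Igraphon (h : R * R -> R) : graphon h ->
  0 <= tK2 h <= 1 -> Ient (tK2 h) <= Igraphon h.
Proof.
move=> gh /andP[t0 t1]; have tangent_le := @Igraphon_ge_tangent h ^~ gh.
have [T0|T0] := eqVneq (tK2 h) 0.
  rewrite T0 /Ient !xlogxE subr0 ln1 !(mul0r, mulr0, addr0).
  apply: ge0_halfln_le => b b01; have := tangent_le (1 - b) ltac:(lra).
  by rewrite T0 subKr subr0 mul0r add0r mul1r.
have [T1|T1] := eqVneq (tK2 h) 1.
  rewrite T1 /Ient !xlogxE subrr ln1 !(mul0r, mulr0, addr0).
  by apply: ge0_halfln_le => b b01; have := tangent_le b b01; rewrite T1 subrr mul0r addr0 mul1r.
rewrite /Ient !xlogxE -mulrDr; apply: tangent_le.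
by rewrite !lt_neqAle eq_sym T0 T1 t0 t1.
Qed.

Section ConstantGraphon.
Variable c : R.

Lemma graphon_cst : 0 <= c <= 1 -> graphon (fun=> c).
Proof. by split; first exact: measurable_cst. Qed.

Lemma tK2_cst : tK2 (fun=> c) = c.
Proof. exact: Rintegral_sq01_cst. Qed.

Lemma tK3_cst : tK3 (fun=> c) = c ^+ 3.
Proof.
rewrite /tK3 Rintegral_cst; last exact: measurable_cube01.
have -> : fine (leb3 R (cube01 R)) = 1 by rewrite leb3_cube01.
by rewrite mulr1 !exprS expr0 mulr1 mulrA.
Qed.

Lemma Igraphon_cst : Igraphon (fun=> c) = Ient c.
Proof. exact: Rintegral_sq01_cst. Qed.

End ConstantGraphon.
End GraphonEntropy.

Theorem mainTheorem7 (R : realType) (T1 T2 : R) :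
  0 <= T1 <= 1 -> T2 = T1 ^+ 3 ->
  inf [set Igraphon h | h in
        [set h : R * R -> R | graphon h /\ tK2 h = T1 /\ tK3 h = T2]]
  = Ient (T2 `^ (3%:R^-1)) /\
  Ient (T2 `^ (3%:R^-1)) = Ient T1.
Proof.
move=> T1_01 ->; have T1_ge0 : 0 <= T1 by case/andP: T1_01.
have -> : (T1 ^+ 3) `^ (3%:R^-1) = T1.
  by rewrite -powR_mulrn // -powRrM mulfV ?pnatr_eq0 // powRr1.
split => //; set E := [set Igraphon h | h in _].
have E_cst : E (Ient T1).
  exists (fun=> T1); last exact: Igraphon_cst.
  by split; [exact: graphon_cst | split; [exact: tK2_cst | exact: tK3_cst]].
have E_lb : lbound E (Ient T1).
  by move=> _ [h [gh [T1E _]] <-]; rewrite -T1E in T1_01 *; exact: Ient_le_Igraphon.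
apply/le_anti/andP; split.
- by apply: (ge_inf _ E_cst); exists (Ient T1).
- by apply: lb_le_inf E_lb; exists (Ient T1).
Qed.
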